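(* Fix $i\in[1,n]$ and let $\alpha(i,j)=\max\{\beta(i,j),\gamma(i,j)\}$ for $j\in[i,n]$. Let $j'(i)$ be the smallest index $j\in[i,n]$ with $\gamma(i,j)\le\beta(i,j)$ (it exists since $\gamma(i,n)=0\le\beta(i,n)$). Then the minimum of $\alpha(i,j)$ over $j\in[i,n]$ is attained at $j=j'(i)$ or at $j=j'(i)-1$ (the latter only possible when $j'(i)>i$); that is, $\min_{j\in[i,n]}\alpha(i,j)=\min\{\alpha(i,j):j\in\{j'(i)-1,j'(i)\}\cap[i,n]\}$.
   Context: Let $v_1,\dots,v_n$ be points of a metric space with metric $|\cdot|$ (symmetric, nonnegative, $|v_iv_j|=0$ iff $i=j$, triangle inequality). For $i\le j$ let $d_P(v_i,v_j)=\sum_{k=i}^{j-1}|v_kv_{k+1}|$ and $d_P(v_j,v_i)=d_P(v_i,v_j)$. For $1\le i\le j\le n$: $\beta(i,j)=\max_{k\in[i,j]}\min\{d_P(v_i,v_k),|v_iv_j|+d_P(v_k,v_j)\}$; $\gamma(i,j)=|v_iv_j|+d_P(v_j,v_n)$ if $j<n$ and $\gamma(i,n)=0$. Then $\alpha(i,j)$ equals the maximum over $k\in[i,n]$ of the shortest-path distance from $v_i$ to $v_k$ in the path $v_1\cdots v_n$ augmented with an edge $e(v_i,v_j)$ of length $|v_iv_j|$. *)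

From Stdlib Require Import Reals Lra Lia Arith.
Open Scope R_scope.

Definition is_metric {T : Type} (d : T -> T -> R) : Prop :=
  (forall x y, d x y = d y x) /\
  (forall x y, 0 <= d x y) /\
  (forall x y, d x y = 0 <-> x = y) /\
  (forall x y z, d x z <= d x y + d y z).

Fixpoint pathsum {T : Type} (d : T -> T -> R) (v : nat -> T) (a m : nat) : R :=
  match m with
  | O => 0
  | S m' => pathsum d v a m' + d (v (a + m')%nat) (v (S (a + m')))
  end.

Definition dP {T : Type} (d : T -> T -> R) (v : nat -> T) (i j : nat) : R :=
  if (i <=? j)%nat then pathsum d v i (j - i) else pathsum d v j (i - j).

Fixpoint maxr (f : nat -> R) (a m : nat) : R :=
  match m with
  | O => f a
  | S m' => Rmax (maxr f a m') (f (a + S m')%nat)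
  end.

Fixpoint minr (f : nat -> R) (a m : nat) : R :=
  match m with
  | O => f a
  | S m' => Rmin (minr f a m') (f (a + S m')%nat)
  end.

Definition beta {T : Type} (d : T -> T -> R) (v : nat -> T) (i j : nat) : R :=
  maxr (fun k => Rmin (dP d v i k) (d (v i) (v j) + dP d v k j)) i (j - i).

Definition gamma {T : Type} (d : T -> T -> R) (v : nat -> T) (n i j : nat) : R :=
  if (j <? n)%nat then d (v i) (v j) + dP d v j n else 0.

Definition alpha {T : Type} (d : T -> T -> R) (v : nat -> T) (n i j : nat) : R :=
  Rmax (beta d v i j) (gamma d v n i j).

(* Both halves of alpha are monotone in j, by the triangle inequality: beta(i,j)
   is nondecreasing, because moving the end of the shortcut from v_j to v_(j+1)
   lengthens |v_i v_j| + d_P(v_k,v_j) by |v_i v_(j+1)| + |v_(j+1) v_j| - |v_i v_j|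
   >= 0; gamma(i,j) is nonincreasing, because |v_i v_(j+1)| <= |v_i v_j| + |v_j v_(j+1)|.
   The maximum of a nondecreasing and a nonincreasing function is minimized where
   they cross: left of j' it equals gamma >= gamma(i,j'-1), from j' on it equals
   beta >= beta(i,j'). *)

From Stdlib Require Import Reals Lra Lia Arith.
Open Scope R_scope.

Lemma minr_le f a m k : (a <= k <= a + m)%nat -> minr f a m <= f k.
Proof.
  revert k; induction m as [|m IH]; intros k Hk; simpl.
  - replace k with a by lia; lra.
  - destruct (Nat.eq_dec k (a + S m)) as [->|Hne].
    + apply Rmin_r.
    + eapply Rle_trans; [apply Rmin_l|]. apply IH; lia.
Qed.

Lemma minr_glb f a m L :
  (forall k, (a <= k <= a + m)%nat -> L <= f k) -> L <= minr f a m.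
Proof.
  induction m as [|m IH]; intros H; simpl.
  - apply H; lia.
  - apply Rmin_glb; [apply IH; intros; apply H|apply H]; lia.
Qed.

Lemma maxr_le_compat f g a m :
  (forall k, (a <= k <= a + m)%nat -> f k <= g k) -> maxr f a m <= maxr g a m.
Proof.
  induction m as [|m IH]; intros H; simpl.
  - apply H; lia.
  - apply Rmax_lub.
    + eapply Rle_trans; [apply IH; intros; apply H; lia|apply Rmax_l].
    + eapply Rle_trans; [apply H; lia|apply Rmax_r].
Qed.

Lemma nondecreasing_of_succ (f : nat -> R) a b :
  (forall j, (a <= j < b)%nat -> f j <= f (S j)) ->
  forall j k, (a <= j <= k)%nat -> (k <= b)%nat -> f j <= f k.
Proof.
  intros Hstep j k Hjk Hkb. induction k as [|k IH].
  - replace j with 0%nat by lia; lra.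
  - destruct (Nat.eq_dec j (S k)) as [->|Hne]; [lra|].
    eapply Rle_trans; [apply IH; lia|apply Hstep; lia].
Qed.

Lemma nonincreasing_of_succ (f : nat -> R) a b :
  (forall j, (a <= j < b)%nat -> f (S j) <= f j) ->
  forall j k, (a <= j <= k)%nat -> (k <= b)%nat -> f k <= f j.
Proof.
  intros Hstep j k Hjk Hkb.
  enough (- f j <= - f k) by lra.
  apply (nondecreasing_of_succ (fun j => - f j) a b); try lia.
  intros l Hl. specialize (Hstep l Hl). lra.
Qed.

Section MinOfMaxOfMonotone.

Variables (b g : nat -> R) (i n j' : nat).
Hypothesis b_nondecr : forall j k, (i <= j <= k)%nat -> (k <= n)%nat -> b j <= b k.
Hypothesis g_nonincr : forall j k, (i <= j <= k)%nat -> (k <= n)%nat -> g k <= g j.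
Hypothesis j'_range : (i <= j' <= n)%nat.
Hypothesis g_le_b_at_j' : g j' <= b j'.
Hypothesis b_lt_g_before_j' : forall j, (i <= j < j')%nat -> ~ (g j <= b j).

Lemma minr_max_at_crossing :
  minr (fun j => Rmax (b j) (g j)) i (n - i) =
    (if (i <? j')%nat
     then Rmin (Rmax (b (j' - 1)) (g (j' - 1))) (Rmax (b j') (g j'))
     else Rmax (b j') (g j')).
Proof.
  set (h := fun j => Rmax (b j) (g j)).
  assert (h_at_j' : h j' = b j') by (apply Rmax_left; lra).
  assert (h_from_j' : forall k, (j' <= k <= n)%nat -> h j' <= h k).
  { intros k Hk. rewrite h_at_j'.
    eapply Rle_trans; [apply (b_nondecr j' k); lia|apply Rmax_l]. }
  apply Rle_antisym.
  - destruct (Nat.ltb_spec i j').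
    + apply Rmin_glb; apply (minr_le h); lia.
    + apply (minr_le h); lia.
  - apply minr_glb. intros k Hk. destruct (Nat.ltb_spec i j').
    + destruct (Nat.ltb_spec k j').
      * eapply Rle_trans; [apply Rmin_l|].
        assert (Rmax (b (j' - 1)) (g (j' - 1)) = g (j' - 1)%nat) as ->.
        { apply Rmax_right. apply Rlt_le, Rnot_le_lt, b_lt_g_before_j'; lia. }
        eapply Rle_trans; [apply (g_nonincr k (j' - 1)); lia|apply Rmax_r].
      * eapply Rle_trans; [apply Rmin_r|apply h_from_j'; lia].
    + apply h_from_j'; lia.
Qed.

End MinOfMaxOfMonotone.

Section PathOfMetric.

Variables (T : Type) (d : T -> T -> R) (v : nat -> T).
Hypothesis d_metric : is_metric d.

Lemma pathsum_ge0 a m : 0 <= pathsum d v a m.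
Proof.
  destruct d_metric as [_ [d_ge0 _]].
  induction m as [|m IH]; simpl; [lra|].
  specialize (d_ge0 (v (a + m)%nat) (v (S (a + m)))). lra.
Qed.

Lemma pathsum_succ_front a m :
  pathsum d v a (S m) = d (v a) (v (S a)) + pathsum d v (S a) m.
Proof.
  induction m as [|m IH].
  - simpl. rewrite Nat.add_0_r. lra.
  - change (pathsum d v a (S (S m)))
      with (pathsum d v a (S m) + d (v (a + S m)%nat) (v (S (a + S m)))).
    rewrite IH. simpl. replace (a + S m)%nat with (S (a + m)) by lia. lra.
Qed.

Lemma dP_of_le k j : (k <= j)%nat -> dP d v k j = pathsum d v k (j - k).
Proof. intros H; unfold dP; destruct (Nat.leb_spec k j); [reflexivity|lia]. Qed.

Lemma gamma_succ_le n i j : (j < n)%nat -> gamma d v n i (S j) <= gamma d v n i j.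
Proof.
  destruct d_metric as [_ [d_ge0 [_ d_tri]]]. intros Hj.
  unfold gamma. destruct (Nat.ltb_spec j n); [|lia].
  rewrite !dP_of_le by lia.
  destruct (Nat.ltb_spec (S j) n).
  - replace (n - j)%nat with (S (n - S j)) by lia. rewrite pathsum_succ_front.
    specialize (d_tri (v i) (v j) (v (S j))). lra.
  - pose proof (pathsum_ge0 j (n - j)). specialize (d_ge0 (v i) (v j)). lra.
Qed.

Lemma beta_le_succ i j : (i <= j)%nat -> beta d v i j <= beta d v i (S j).
Proof.
  destruct d_metric as [d_sym [_ [_ d_tri]]]. intros Hij. unfold beta.
  replace (S j - i)%nat with (S (j - i)) by lia. simpl.
  eapply Rle_trans; [|apply Rmax_l].
  apply maxr_le_compat. intros k Hk.
  apply Rmin_glb; [apply Rmin_l|].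
  eapply Rle_trans; [apply Rmin_r|].
  rewrite !dP_of_le by lia. replace (S j - k)%nat with (S (j - k)) by lia. simpl.
  replace (k + (j - k))%nat with j by lia.
  specialize (d_tri (v i) (v (S j)) (v j)). rewrite (d_sym (v (S j)) (v j)) in d_tri.
  lra.
Qed.

End PathOfMetric.

Theorem mainTheorem7 (T : Type) (d : T -> T -> R) (v : nat -> T) (n i j' : nat) :
  is_metric d ->
  (forall a b, (1 <= a <= n)%nat -> (1 <= b <= n)%nat -> v a = v b -> a = b) ->
  (1 <= i <= n)%nat ->
  (* j' is the smallest index in [i,n] with gamma(i,j') <= beta(i,j') *)
  (i <= j' <= n)%nat ->
  gamma d v n i j' <= beta d v i j' ->
  (forall j, (i <= j < j')%nat -> ~ (gamma d v n i j <= beta d v i j)) ->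
  minr (alpha d v n i) i (n - i) =
    (if (i <? j')%nat
     then Rmin (alpha d v n i (j' - 1)) (alpha d v n i j')
     else alpha d v n i j').
Proof.
  intros Hd _ _ Hj' Hcross Hbefore.
  apply (minr_max_at_crossing (beta d v i) (gamma d v n i)); auto.
  - apply (nondecreasing_of_succ _ i n).
    intros j Hj. apply beta_le_succ; auto; lia.
  - apply (nonincreasing_of_succ _ i n).
    intros j Hj. apply gamma_succ_le; auto; lia.
Qed.
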